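(* Let $(G,X,\alpha)$ and $(H,X,\gamma)$ be $G$-spaces (with the same phase space $X$), and let $(\varphi,\mathrm{id}):(G,X,\alpha)\to(H,X,\gamma)$ be an equivariant pair of maps, i.e. $\varphi:G\to H$ is a continuous homomorphism with $\alpha(g,x)=\gamma(\varphi(g),x)$ for all $g\in G$, $x\in X$. Assume $\varphi$ is an epimorphism (surjective). Then: (a) $\ker\varphi\subset \ker_\alpha$; (b) $\varphi(\ker_\alpha)=\ker_\gamma$, and if $\alpha$ is effective then $\gamma$ is effective; (c) $Gx=Hx$ for every $x\in X$; in particular, if $\alpha$ is transitive then $\gamma$ is transitive; (d) if $\alpha$ is open (resp. $d$-open) then $\gamma$ is open (resp. $d$-open), and the components of the actions $\alpha$ and $\gamma$ coincide; (e) if $\mathcal U$ is an equiuniformity on $X$ for $(H,X,\gamma)$, then $\mathcal U$ is an equiuniformity on $X$ for $(G,X,\alpha)$; hence if $(H,X,\gamma)$ is $G$-Tychonoff then $(G,X,\alpha)$ is $G$-Tychonoff.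
   Context: All spaces are Tychonoff and all maps continuous. A $G$-space $(G,X,\alpha)$ is a topological group $G$ with a continuous action $\alpha:G\times X\to X$ (written $gx=\alpha(g,x)$). The kernel of the action is $\ker_\alpha=\{g\in G: gx=x \text{ for all } x\in X\}$; the action is effective if $\ker_\alpha=\{e\}$ and transitive if $Gx=X$ for some (any) $x$. $N_G(e)$ denotes the family of open neighborhoods of the unit. The action is open if $x\in\operatorname{Int}(Ox)$ for all $x\in X$, $O\in N_G(e)$, and $d$-open if $x\in\operatorname{Int}(\operatorname{cl}(Ox))$ for all $x\in X$, $O\in N_G(e)$. For a $d$-open action, $X$ is a disjoint union of clopen sets $\operatorname{cl}(Gx)$, $x\in X$, called the components of the action. Uniformities are given by families of open covers. A uniformity $\mathcal U$ on $X$ is an equiuniformity for $(G,X,\alpha)$ if it is saturated ($gu=\{gU:U\in u\}\in\mathcal U$ for all $u\in\mathcal U$, $g\in G$) and bounded (for every $u\in\mathcal U$ there are $O\in N_G(e)$ and $v\in\mathcal U$ such that the cover $\{OV:V\in v\}$ refines $u$). $(G,X,\alpha)$ is $G$-Tychonoff if there is a compactification $bX$ of $X$ and a continuous action of $G$ on $bX$ extending $\alpha$ (equivalently, via an equivariant embedding $(\mathrm{id},f)$). *)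

From HB Require Import structures.
From mathcomp Require Import all_boot all_order all_algebra.
From mathcomp Require Import all_classical all_reals all_analysis.

Set Implicit Arguments.
Unset Strict Implicit.
Unset Printing Implicit Defensive.

Local Open Scope classical_set_scope.

Definition tychonoff_space (T : topologicalType) : Prop :=
  completely_regular_space T /\ accessible_space T.

Record topGroup := TopGroup {
  tg_car :> topologicalType;
  tg_mul : tg_car -> tg_car -> tg_car;
  tg_inv : tg_car -> tg_car;
  tg_one : tg_car;
  tg_mulA : forall a b c, tg_mul a (tg_mul b c) = tg_mul (tg_mul a b) c;
  tg_mul1g : forall a, tg_mul tg_one a = a;
  tg_mulg1 : forall a, tg_mul a tg_one = a;
  tg_mulVg : forall a, tg_mul (tg_inv a) a = tg_one;
  tg_mulgV : forall a, tg_mul a (tg_inv a) = tg_one;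
  tg_mul_cont : continuous (fun p : tg_car * tg_car => tg_mul p.1 p.2);
  tg_inv_cont : continuous tg_inv }.

Arguments tg_mul {t}.
Arguments tg_inv {t}.
Arguments tg_one {t}.

Section Defs.
Context (G : topGroup) (X : topologicalType).

Definition nbhs_unit : set (set G) := [set O | open O /\ O tg_one].

Definition is_action (alpha : G -> X -> X) : Prop :=
  [/\ (forall x, alpha tg_one x = x),
      (forall g h x, alpha (tg_mul g h) x = alpha g (alpha h x))
    & continuous (fun p : G * X => alpha p.1 p.2)].

Definition act_ker (alpha : G -> X -> X) : set G :=
  [set g | forall x, alpha g x = x].

Definition effective (alpha : G -> X -> X) : Prop :=
  act_ker alpha = [set tg_one].

Definition act_set (alpha : G -> X -> X) (O : set G) (A : set X) : set X :=
  [set alpha g y | g in O & y in A].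

Definition act_orbit (alpha : G -> X -> X) (x : X) : set X :=
  [set alpha g x | g in [set: G]].

Definition transitive_action (alpha : G -> X -> X) : Prop :=
  forall x, act_orbit alpha x = [set: X].

Definition open_action (alpha : G -> X -> X) : Prop :=
  forall x O, nbhs_unit O -> (act_set alpha O [set x])° x.

Definition d_open_action (alpha : G -> X -> X) : Prop :=
  forall x O, nbhs_unit O -> (closure (act_set alpha O [set x]))° x.

Definition act_components (alpha : G -> X -> X) : set (set X) :=
  [set closure (act_orbit alpha x) | x in [set: X]].

End Defs.

Section Unif.
Context (X : topologicalType).

Definition is_cover (u : set (set X)) : Prop :=
  forall x, exists2 U, u U & U x.

Definition open_cover (u : set (set X)) : Prop :=
  is_cover u /\ (forall U, u U -> open U).

Definition refines (u v : set (set X)) : Prop :=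
  forall U, u U -> exists2 V, v V & U `<=` V.

Definition cover_star (A : set X) (u : set (set X)) : set X :=
  \bigcup_(U in [set U | u U /\ U `&` A !=set0]) U.

Definition star_refines (v u : set (set X)) : Prop :=
  forall V, v V -> exists2 U, u U & cover_star V v `<=` U.

(* a uniformity on X (compatible with the topology of X), given as a
   family of open covers *)
Definition is_uniformity (UU : set (set (set X))) : Prop :=
  [/\ (forall u, UU u -> open_cover u) /\ UU !=set0,
      (forall u v, UU u -> open_cover v -> refines u v -> UU v),
      (forall u v, UU u -> UU v -> exists2 w, UU w & refines w u /\ refines w v),
      (forall u, UU u -> exists2 v, UU v & star_refines v u)
    & (forall x O, open O -> O x -> exists2 u, UU u & cover_star [set x] u `<=` O)].

End Unif.

Section Equi.
Context (G : topGroup) (X : topologicalType).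

Definition saturated (alpha : G -> X -> X) (UU : set (set (set X))) : Prop :=
  forall u g, UU u -> UU [set alpha g @` U | U in u].

Definition bounded (alpha : G -> X -> X) (UU : set (set (set X))) : Prop :=
  forall u, UU u -> exists O, exists v,
    [/\ nbhs_unit O, UU v & refines [set act_set alpha O V | V in v] u].

Definition equiuniformity (alpha : G -> X -> X) (UU : set (set (set X))) :=
  [/\ is_uniformity UU, saturated alpha UU & bounded alpha UU].

Definition top_embedding (Y : topologicalType) (f : X -> Y) : Prop :=
  [/\ injective f, continuous f &
      (forall U, open U -> exists2 V, open V & f @` U = range f `&` V)].

Definition G_tychonoff (alpha : G -> X -> X) : Prop :=
  exists (Y : topologicalType) (f : X -> Y) (beta : G -> Y -> Y),
    [/\ compact [set: Y] /\ hausdorff_space Y, top_embedding f,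
        dense (range f), is_action beta
      & (forall g x, beta g (f x) = f (alpha g x))].

End Equi.

Definition group_hom (G H : topGroup) (phi : G -> H) : Prop :=
  forall a b, phi (tg_mul a b) = tg_mul (phi a) (phi b).

From HB Require Import structures.
From mathcomp Require Import all_boot all_order all_algebra.
From mathcomp Require Import all_classical all_reals all_analysis.

(* Since [alpha g = gamma (phi g)] and [phi] is onto, [G] and [H] move the
   points of [X] by exactly the same maps, which gives the kernels, orbits and
   components. Openness and equiuniformity need no surjectivity: a unit
   neighbourhood [O] of [H] pulls back to the unit neighbourhood [phi^-1 O] of
   [G], and [alpha (phi^-1 O)] moves points only within [gamma O]. *)

Set Implicit Arguments.
Unset Strict Implicit.
Unset Printing Implicit Defensive.

Local Open Scope classical_set_scope.

Lemma group_hom1 (G H : topGroup) (phi : G -> H) :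
  group_hom phi -> phi tg_one = tg_one.
Proof.
move=> hom; have e := hom tg_one tg_one; rewrite tg_mul1g in e.
have := congr1 (tg_mul (tg_inv (phi tg_one))) e.
by rewrite tg_mulA tg_mulVg tg_mul1g => <-.
Qed.

Lemma nbhs_unit_preimage (G H : topGroup) (phi : G -> H) (O : set H) :
  continuous phi -> group_hom phi -> nbhs_unit O -> nbhs_unit (phi @^-1` O).
Proof.
move=> cphi hom [oO O1]; split; last by rewrite /= group_hom1.
by apply: open_comp => // y _; exact: cphi.
Qed.

Lemma is_action_comp (G H : topGroup) (Y : topologicalType)
    (beta : H -> Y -> Y) (phi : G -> H) :
  continuous phi -> group_hom phi -> is_action beta ->
  is_action (fun g => beta (phi g)).
Proof.
move=> cphi hom [b1 bM bc]; split.
- by move=> y; rewrite group_hom1 // b1.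
- by move=> g h y; rewrite hom bM.
- move=> [g y]; apply: (@continuous2_cvg _ _ _ _ _ _ (phi \o fst) snd beta).
  + exact: bc (phi g, y).
  + exact: cvg_comp (@cvg_fst _ _ (nbhs g) (nbhs y) _) (cphi g).
  + exact: (@cvg_snd _ _ (nbhs g) (nbhs y) _).
Qed.

Section ActionFactorization.
Variables (G H : topGroup) (X : topologicalType).
Variables (alpha : G -> X -> X) (gamma : H -> X -> X) (phi : G -> H).
Hypothesis alphaE : forall g x, alpha g x = gamma (phi g) x.

Lemma hom_ker_sub_act_ker : (forall x, gamma tg_one x = x) ->
  [set g | phi g = tg_one] `<=` act_ker alpha.
Proof. by move=> gamma1 g /= phig1 x; rewrite alphaE phig1 gamma1. Qed.

Lemma act_set_preimage (O : set H) (A : set X) :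
  act_set alpha (phi @^-1` O) A `<=` act_set gamma O A.
Proof.
by move=> _ [g Og [y Ay <-]]; exists (phi g) => //; exists y => //; rewrite alphaE.
Qed.

Hypotheses (cphi : continuous phi) (hom : group_hom phi).

Lemma open_action_comp : open_action alpha -> open_action gamma.
Proof.
move=> op x O nO.
exact: (interiorS (@act_set_preimage O [set x]) (op x _ (nbhs_unit_preimage cphi hom nO))).
Qed.

Lemma d_open_action_comp : d_open_action alpha -> d_open_action gamma.
Proof.
move=> op x O nO.
exact: (interiorS (closureS (@act_set_preimage O [set x]))
  (op x _ (nbhs_unit_preimage cphi hom nO))).
Qed.

Lemma equiuniformity_comp (UU : set (set (set X))) :
  equiuniformity gamma UU -> equiuniformity alpha UU.
Proof.
move=> [uni sat bnd]; split => // [u g Uu|u Uu].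
  by rewrite (_ : alpha g = gamma (phi g)); [exact: sat | apply: funext].
have [N [v [nN Uv ref]]] := bnd u Uu.
exists (phi @^-1` N), v; split => //; first exact: nbhs_unit_preimage.
move=> _ [V vV <-]; have [W uW sVW] := ref _ (ex_intro2 _ _ V vV erefl).
by exists W => //; apply: subset_trans sVW; exact: act_set_preimage.
Qed.

Lemma G_tychonoff_comp : G_tychonoff gamma -> G_tychonoff alpha.
Proof.
move=> [Y [f [beta [cpt emb dns act fE]]]].
exists Y, f, (fun g => beta (phi g)); split => //; first exact: is_action_comp.
by move=> g x; rewrite fE alphaE.
Qed.

Hypothesis phi_onto : forall h, exists g, phi g = h.

Lemma image_act_ker : phi @` act_ker alpha = act_ker gamma.
Proof.
apply/seteqP; split; first by move=> _ [g kg <-] x /=; rewrite -alphaE kg.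
move=> h kh; have [g phigh] := phi_onto h; exists g => //.
by move=> x; rewrite alphaE phigh kh.
Qed.

Lemma effective_comp : effective alpha -> effective gamma.
Proof.
rewrite /effective -image_act_ker => ->.
by rewrite image_set1 group_hom1.
Qed.

Lemma act_orbit_comp x : act_orbit alpha x = act_orbit gamma x.
Proof.
apply/seteqP; split => _ [h _ <-].
  by exists (phi h) => //; rewrite alphaE.
by have [g phigh] := phi_onto h; exists g => //; rewrite alphaE phigh.
Qed.

Lemma act_components_comp : act_components alpha = act_components gamma.
Proof.
by apply/seteqP; split => _ [x _ <-]; exists x => //; rewrite act_orbit_comp.
Qed.

End ActionFactorization.

Theorem proposition2p11 (G H : topGroup) (X : topologicalType)
  (alpha : G -> X -> X) (gamma : H -> X -> X) (phi : G -> H) :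
  tychonoff_space X -> tychonoff_space G -> tychonoff_space H ->
  is_action alpha -> is_action gamma ->
  continuous phi -> group_hom phi ->
  (forall g x, alpha g x = gamma (phi g) x) ->
  (forall h : H, exists g : G, phi g = h) ->
  (* (a) *)
  [set g | phi g = tg_one] `<=` act_ker alpha /\
  (* (b) *)
  (phi @` act_ker alpha = act_ker gamma /\ (effective alpha -> effective gamma)) /\
  (* (c) *)
  ((forall x, act_orbit alpha x = act_orbit gamma x) /\ (transitive_action alpha -> transitive_action gamma)) /\
  (* (d) *)
  ((open_action alpha -> open_action gamma) /\
   (d_open_action alpha -> d_open_action gamma) /\
   (d_open_action alpha -> act_components alpha = act_components gamma)) /\
  (* (e) *)
  ((forall UU, equiuniformity gamma UU -> equiuniformity alpha UU) /\
   (G_tychonoff gamma -> G_tychonoff alpha)).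
Proof.
move=> _ _ _ _ [gamma1 _ _] cphi hom alphaE phi_onto.
split; first exact: hom_ker_sub_act_ker.
split; first by split; [exact: image_act_ker | exact: effective_comp].
split.
  split=> [|transitive x]; first exact: act_orbit_comp.
  by rewrite -(act_orbit_comp alphaE phi_onto).
split.
  split; first exact: open_action_comp.
  by split=> [|_]; [exact: d_open_action_comp | exact: act_components_comp].
split; [exact: equiuniformity_comp | exact: G_tychonoff_comp].
Qed.
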